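(* Let $q$ be a prime power and let $M$ be a simple and cosimple matroid representable over $GF(q)$ that has two distinct loose elements $e$ and $f$. Then $r(M)\le 2q$.
   Context: All matroids are finite. An element $t$ of a matroid $M$ is loose if every circuit of $M$ containing $t$ has size at least the rank $r(M)$. A matroid is cosimple if its dual is simple. *)

From HB Require Import structures.
From mathcomp Require Import all_boot all_order all_algebra all_field.
Set Implicit Arguments. Unset Strict Implicit. Unset Printing Implicit Defensive.
Import GRing.Theory.

Record matroid (E : finType) := Matroid {
  indep : {set E} -> bool;
  indep0 : indep set0;
  indep_sub : forall I J : {set E}, J \subset I -> indep I -> indep J;
  indep_aug : forall I J : {set E}, indep I -> indep J -> #|I| < #|J| ->
     exists2 x, x \in J :\: I & indep (x |: I)
}.

Section Matroids.
Variable E : finType.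

Definition rank_of (P : {set E} -> bool) : nat := \max_(I : {set E} | P I) #|I|.
Definition basis_of (P : {set E} -> bool) (B : {set E}) : bool :=
  P B && (#|B| == rank_of P).
Definition circuit_of (P : {set E} -> bool) (C : {set E}) : bool :=
  ~~ P C && [forall x in C, P (C :\ x)].
(* simple: no circuit of size 1 (loop) or 2 (parallel pair) *)
Definition simple_of (P : {set E} -> bool) : Prop :=
  forall C, circuit_of P C -> 2 < #|C|.

Variable M : matroid E.

Definition mrank : nat := rank_of (indep M).
Definition circuit (C : {set E}) : bool := circuit_of (indep M) C.
Definition basis (B : {set E}) : bool := basis_of (indep M) B.

Definition dual_indep (I : {set E}) : bool :=
  [exists B : {set E}, basis B && (I \subset ~: B)].

Definition simple : Prop := simple_of (indep M).
Definition cosimple : Prop := simple_of dual_indep.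

Definition loose (t : E) : Prop :=
  forall C, circuit C -> t \in C -> mrank <= #|C|.

Definition representable (F : fieldType) : Prop :=
  exists (n : nat) (v : E -> 'rV[F]_n),
    forall I : {set E}, indep M I = free [seq v x | x <- enum I].
End Matroids.

Definition prime_power (q : nat) : Prop :=
  exists p k, prime p /\ 0 < k /\ q = p ^ k.

(** Cosimplicity makes {e, f} coindependent, so some basis B avoids both e
and f; write [v e = \sum_(y in B) a y *: v y] and [v f = \sum_(y in B) c y *: v y].
The support of the coordinates of a loose element together with the element
contains its fundamental circuit, so [a] and [c] vanish at most once on B.
For each scalar l, the vector [v f - l *: v e] is spanned by e and the support
S of [c - l a], so f lies in the closure of [e |: S] and looseness of e or f
forces [c - l a] to vanish at most twice on B.  Every y in B is a zero of [a]
or of [c - (c y / a y) a], whence [r(M) = #|B| <= 1 + 1 + 2 (q - 1) = 2 q]. *)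
From HB Require Import structures.
From mathcomp Require Import all_boot all_order all_algebra all_field.
From mathcomp Require Import zify.
Set Implicit Arguments. Unset Strict Implicit. Unset Printing Implicit Defensive.
Import GRing.Theory.

Section IndependencePredicates.
Variables (E : finType) (P : {set E} -> bool).

Lemma circuit_of_dep (D : {set E}) :
  ~~ P D -> exists2 C : {set E}, C \subset D & circuit_of P C.
Proof.
move=> depD; have [C minC CD] := minset_exists (P := [pred A | ~~ P A]) depD.
exists C => //; have [depC minimal] := minsetP minC.
rewrite /circuit_of [~~ P C]depC; apply/forall_inP => x xC; apply: contraT => depCx.
by have := setD11 x C; rewrite (minimal _ depCx (subD1set C x)) xC.
Qed.

Lemma simple_of_indep_card_le2 (D : {set E}) :
  simple_of P -> #|D| <= 2 -> P D.
Proof.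
move=> simpleP smallD; apply: contraT => /circuit_of_dep[C CD circC].
by have := leq_trans (simpleP C circC) (leq_trans (subset_leq_card CD) smallD).
Qed.

End IndependencePredicates.

Section MatroidFacts.
Variables (E : finType) (M : matroid E).

Lemma indep_card_le_mrank (I : {set E}) : indep M I -> #|I| <= mrank M.
Proof. exact: (@leq_bigmax_cond _ (indep M) (fun J => #|J|)). Qed.

Lemma basis_card (B : {set E}) : basis M B -> #|B| = mrank M.
Proof. by case/andP=> _ /eqP. Qed.

Lemma basis_setU1_dep (B : {set E}) (x : E) :
  basis M B -> x \notin B -> ~~ indep M (x |: B).
Proof.
move=> basB xB; apply/negP => /indep_card_le_mrank.
by rewrite cardsU1 xB -(basis_card basB) ltnn.
Qed.

Lemma loose_dep_bound (S : {set E}) (x : E) :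
  loose M x -> indep M S -> ~~ indep M (x |: S) -> mrank M <= #|S|.+1.
Proof.
move=> lx indS /circuit_of_dep[C CxS circC].
have xC : x \in C.
  apply: contraT => xNC; case/andP: circC => /negP[]; apply: indep_sub indS.
  apply/subsetP => y yC; have := subsetP CxS y yC.
  by case/setU1P => // yx; rewrite -yx yC in xNC.
apply: leq_trans (lx C circC xC) _; apply: leq_trans (subset_leq_card CxS) _.
by rewrite cardsU1; case: (x \notin S).
Qed.

End MatroidFacts.

Lemma card_support_add_zeros (T : finType) (V : zmodType) (B : {set T})
    (w : T -> V) :
  #|[set y in B | w y != 0%R]| + #|[set y in B | w y == 0%R]| = #|B|.
Proof.
rewrite -(cardsID [set y | w y != 0%R] B).
by congr (_ + _); apply: eq_card => y; rewrite !inE // negbK andbC.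
Qed.

Section SpanOfSet.
Variables (F : fieldType) (vT : vectType F) (T : finType) (v : T -> vT).
Local Open Scope ring_scope.

Definition span_of (S : {set T}) : {vspace vT} := <<[seq v y | y <- enum S]>>%VS.

Lemma mem_span_of (S : {set T}) (y : T) : y \in S -> v y \in span_of S.
Proof. by move=> yS; apply/memv_span/map_f; rewrite mem_enum. Qed.

Lemma span_ofS (S S' : {set T}) : S \subset S' -> (span_of S <= span_of S')%VS.
Proof.
move=> SS'; apply: sub_span => _ /mapP[y yS ->]; apply: map_f.
by rewrite mem_enum (subsetP SS') // -mem_enum.
Qed.

Lemma sum_in_span_support (B : {set T}) (w : T -> F) :
  \sum_(y in B) w y *: v y \in span_of [set y in B | w y != 0].
Proof.
apply: memv_suml => y yB; have [->|w_neq0] := eqVneq (w y) 0.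
  by rewrite scale0r mem0v.
by apply/memvZ/mem_span_of; rewrite inE yB.
Qed.

End SpanOfSet.

Section Representation.
Variables (E : finType) (M : matroid E) (F : fieldType) (vT : vectType F).
Variable v : E -> vT.
Hypothesis indep_free : forall I : {set E}, indep M I = free [seq v x | x <- enum I].
Local Open Scope ring_scope.

Lemma indep_setU1 (S : {set E}) (x : E) : x \notin S ->
  indep M (x |: S) = (v x \notin span_of v S) && indep M S.
Proof.
move=> xS; have perm_xS : perm_eq (enum (x |: S)) (x :: enum S).
  apply: uniq_perm; rewrite ?enum_uniq //= ?mem_enum ?xS ?enum_uniq //.
  by move=> y; rewrite mem_enum !inE mem_enum.
by rewrite !indep_free (perm_free (perm_map v perm_xS)) free_cons.
Qed.

Lemma indep_span_coords (B : {set E}) (u : vT) :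
  indep M B -> u \in span_of v B ->
  exists w : E -> F, u = \sum_(y in B) w y *: v y.
Proof.
rewrite indep_free => freeB /(free_span freeB)[k -> _].
by exists (k \o v); rewrite big_map big_enum.
Qed.

Lemma basis_coords (B : {set E}) (x : E) : basis M B -> x \notin B ->
  exists w : E -> F, v x = \sum_(y in B) w y *: v y.
Proof.
move=> basB xB; have indB : indep M B by case/andP: basB.
apply: (indep_span_coords indB).
by have := basis_setU1_dep basB xB; rewrite indep_setU1 // indB andbT negbK.
Qed.

Lemma loose_span_bound (S : {set E}) (x : E) :
  loose M x -> indep M S -> x \notin S -> v x \in span_of v S ->
  (mrank M <= #|S|.+1)%N.
Proof.
by move=> lx indS xS vxS; apply: loose_dep_bound lx indS _; rewrite indep_setU1 // vxS.
Qed.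

Lemma loose_zeros_le1 (B : {set E}) (x : E) (w : E -> F) :
  loose M x -> indep M B -> x \notin B -> v x = \sum_(y in B) w y *: v y ->
  (#|[set y in B | w y == 0%R]| <= 1)%N.
Proof.
move=> lx indB xB Ex; set S := [set y in B | w y != 0].
have SB : S \subset B by apply/subsetP => y; rewrite inE => /andP[].
have xS : x \notin S by apply: contra xB; apply: (subsetP SB).
rewrite -(leq_add2l #|S|) card_support_add_zeros addn1.
apply: leq_trans (indep_card_le_mrank indB) (loose_span_bound lx _ xS _).
  exact: indep_sub SB indB.
by rewrite Ex sum_in_span_support.
Qed.

Lemma loose_pencil_zeros_le2 (B : {set E}) (e f : E) (a c : E -> F) :
  loose M e -> loose M f -> e != f -> indep M B -> e \notin B -> f \notin B ->
  v e = \sum_(y in B) a y *: v y -> v f = \sum_(y in B) c y *: v y ->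
  forall l : F, (#|[set y in B | c y == (l * a y)%R]| <= 2)%N.
Proof.
move=> le lf ef indB eB fB Ee Ef l; pose w y := c y - l * a y.
have Ew : v f - l *: v e = \sum_(y in B) w y *: v y.
  rewrite Ee Ef scaler_sumr -sumrB.
  by apply: eq_bigr => y _; rewrite scalerBl scalerA.
set S := [set y in B | w y != 0].
have SB : S \subset B by apply/subsetP => y; rewrite inE => /andP[].
have indS := indep_sub SB indB.
have eS : e \notin S by apply: contra eB; apply: (subsetP SB).
have -> : [set y in B | c y == l * a y] = [set y in B | w y == 0].
  by apply: eq_finset => y; rewrite subr_eq0.
rewrite -(leq_add2l #|S|) card_support_add_zeros addn2.
apply: leq_trans (indep_card_le_mrank indB) _.
have [indeS|] := boolP (indep M (e |: S)); last first.
  by move/(loose_dep_bound le indS)/leqW.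
have feS : f \notin e |: S.
  by rewrite in_setU1 negb_or eq_sym ef; apply: contra fB; apply: (subsetP SB).
have vf_span : v f \in span_of v (e |: S).
  rewrite -[v f](subrK (l *: v e)); apply: memvD.
    by apply: subvP (span_ofS v (subsetU1 e S)) _ _; rewrite Ew sum_in_span_support.
  by apply/memvZ/mem_span_of/setU11.
by have := loose_span_bound lf indeS feS vf_span; rewrite cardsU1 eS.
Qed.

End Representation.

Lemma card_le_zeros_add_pencil (F : finFieldType) (T : finType) (B : {set T})
    (a c : T -> F) :
  #|B| <= #|[set y in B | a y == 0%R]|
          + \sum_(l : F) #|[set y in B | c y == (l * a y)%R]|.
Proof.
have card_in (p : pred T) : #|[set y in B | p y]| = \sum_(y in B) p y.
  by rewrite -sum1dep_card big_mkcondr /=; apply: eq_bigr => y _; case: (p y).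
under eq_bigr => l _ do rewrite (card_in (fun y => c y == l * a y)%R).
rewrite card_in exchange_big -big_split -sum1_card /=; apply: leq_sum => y _.
have [-> //|a_neq0] := eqVneq (a y) 0%R.
by rewrite (bigD1 (c y / a y)%R) //= divfK // eqxx.
Qed.

Lemma sum_lt_double (T : finType) (t0 : T) (g : T -> nat) :
  g t0 <= 1 -> (forall t, g t <= 2) -> \sum_t g t < 2 * #|T|.
Proof.
move=> g_t0 g_le2; rewrite mulnC -sum_nat_const.
rewrite (bigD1 t0) //= [X in _ < X](bigD1 t0) //= -addSn.
by rewrite leq_add // leq_sum.
Qed.

Lemma pencil_zeros_card_bound (F : finFieldType) (T : finType) (B : {set T})
    (a c : T -> F) :
  #|[set y in B | a y == 0%R]| <= 1 -> #|[set y in B | c y == 0%R]| <= 1 ->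
  (forall l : F, #|[set y in B | c y == (l * a y)%R]| <= 2) ->
  #|B| <= 2 * #|F|.
Proof.
move=> a_zeros c_zeros pencil_zeros.
have pencil_sum : \sum_(l : F) #|[set y in B | c y == (l * a y)%R]| < 2 * #|F|.
  apply: (@sum_lt_double F 0%R) => [|l]; last exact: pencil_zeros.
  apply: leq_trans c_zeros; by apply/eq_leq/eq_card => y; rewrite !inE mul0r.
by have := card_le_zeros_add_pencil B a c; lia.
Qed.

Theorem corollary4p4 (q : nat) (F : finFieldType) (E : finType) (M : matroid E)
  (e f : E) :
  prime_power q -> #|F| = q ->
  simple M -> cosimple M -> representable M F ->
  e != f -> loose M e -> loose M f ->
  mrank M <= 2 * q.
Proof.
move=> _ <- _ cosimM [n [v indep_free]] ef le lf.
have /existsP[B /andP[basB /subsetP efNB]] : dual_indep M [set e; f].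
  by apply: simple_of_indep_card_le2 cosimM _; rewrite cards2 ef.
have eB : e \notin B by rewrite -in_setC efNB // !inE eqxx.
have fB : f \notin B by rewrite -in_setC efNB // !inE eqxx orbT.
have indB : indep M B by case/andP: basB.
have [a Ea] := basis_coords indep_free basB eB.
have [c Ec] := basis_coords indep_free basB fB.
have a_zeros := loose_zeros_le1 indep_free le indB eB Ea.
have c_zeros := loose_zeros_le1 indep_free lf indB fB Ec.
have pencil_zeros := loose_pencil_zeros_le2 indep_free le lf ef indB eB fB Ea Ec.
rewrite -(basis_card basB).
exact: pencil_zeros_card_bound a_zeros c_zeros pencil_zeros.
Qed.
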